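(* There exists a pair of orientation preserving isometries $A,B$ of $\mathbb{H}^4$ which is linked by half-turns and such that there is neither a point, a line, a plane nor a hyperplane of $\mathbb{H}^4$ invariant under both $A$ and $B$.
   Context: A plane is a $2$-dimensional totally geodesic subspace of $\mathbb{H}^4$. For a plane $P$, the half-turn $H_P$ is the composition of reflections in two orthogonal hyperplanes intersecting in $P$. A pair $A,B$ is linked by half-turns if there are planes $\alpha,\beta,\delta$ with $A=H_\alpha H_\beta$ and $B=H_\beta H_\delta$. *)

(* Hyperboloid model of H^4 inside Minkowski space R^{1,4}. *)
From HB Require Import structures.
From mathcomp Require Import all_boot all_order all_algebra.
From mathcomp Require Import reals.
Set Implicit Arguments. Unset Strict Implicit. Unset Printing Implicit Defensive.
Import Order.TTheory GRing.Theory Num.Theory.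
Local Open Scope ring_scope.

Section Hyp.
Variable R : realType.

Definition lorJ : 'M[R]_5 := diag_mx (\row_(i < 5) (if i == ord0 then -1 else 1)).

Definition mink (u v : 'cV[R]_5) : R := (u^T *m lorJ *m v) ord0 ord0.

Definition inH4 (x : 'cV[R]_5) : Prop := mink x x = -1 /\ 0 < x ord0 ord0.

(* Orientation preserving isometries of H^4 = SO^+(1,4), acting by x |-> M x. *)
Definition isom_or (M : 'M[R]_5) : Prop :=
  M^T *m lorJ *m M = lorJ /\ 0 < M ord0 ord0 /\ \det M = 1.

(* Totally geodesic k-dimensional subspace of H^4: nonempty intersection of H^4
   with a (k+1)-dimensional linear subspace (row space of V) of R^{1,4}. *)
Definition tg_subspace (k : nat) (S : 'cV[R]_5 -> Prop) : Prop :=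
  exists V : 'M[R]_5, \rank V = k.+1 /\ (exists x, S x) /\
    forall x, S x <-> (inH4 x /\ (x^T <= V)%MS).

Definition is_plane := tg_subspace 2.

(* Reflection in the hyperplane H^4 ∩ n^⊥ (n spacelike). *)
Definition refl (n : 'cV[R]_5) : 'M[R]_5 :=
  1%:M - (2 / mink n n) *: (n *m (n^T *m lorJ)).

Definition halfturn (P : 'cV[R]_5 -> Prop) (H : 'M[R]_5) : Prop :=
  exists n1 n2 : 'cV[R]_5,
    0 < mink n1 n1 /\ 0 < mink n2 n2 /\ mink n1 n2 = 0 /\
    (forall x, P x <-> (inH4 x /\ mink n1 x = 0 /\ mink n2 x = 0)) /\
    H = refl n1 *m refl n2.

Definition linked (A B : 'M[R]_5) : Prop :=
  exists (al be de : 'cV[R]_5 -> Prop) (Ha Hb Hd : 'M[R]_5),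
    is_plane al /\ is_plane be /\ is_plane de /\
    halfturn al Ha /\ halfturn be Hb /\ halfturn de Hd /\
    A = Ha *m Hb /\ B = Hb *m Hd.

Definition inv_set (M : 'M[R]_5) (S : 'cV[R]_5 -> Prop) : Prop :=
  forall y, S y <-> exists x, S x /\ M *m x = y.

End Hyp.

From HB Require Import structures.
From mathcomp Require Import all_boot all_order all_algebra.
From mathcomp Require Import reals ring.
Set Implicit Arguments. Unset Strict Implicit. Unset Printing Implicit Defensive.
Import Order.TTheory GRing.Theory Num.Theory.
Local Open Scope ring_scope.

(* The point is that (A - 1)^2 = u v has rank one.
   A totally geodesic subspace S of dimension k <= 3 spans a linear subspace W of
   dimension k + 1 <= 4.  If S were invariant under A and B, then for y in S the
   vector (A - 1)^2 y = (v y) u would lie in W together with all its B-images; some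
   y = B^i x0 has v y <> 0 because the covectors v B^i span the dual space, and
   then the vectors B^i u span the whole R^{1,4}, contradicting dim W <= 4. *)

Lemma scalar_mx11_eq0 (R : nzRingType) (a : R) : ((a%:M : 'M[R]_1) == 0) = (a == 0).
Proof.
by apply/eqP/eqP => [/matrixP/(_ 0 0)|->]; rewrite ?raddf0 // !mxE eqxx mulr1n.
Qed.

Lemma det_1subM (R : comUnitRingType) n (u : 'cV[R]_n) (w : 'rV[R]_n) :
  \det (1%:M - u *m w) = 1 - (w *m u) 0 0.
Proof.
pose M := block_mx (1%:M : 'M[R]_n) u w (1%:M : 'M[R]_1).
have lower_upper : M = block_mx 1%:M 0 w 1%:M *m block_mx 1%:M u 0 (1%:M - w *m u).
  rewrite mulmx_block ?mul1mx ?mulmx1 ?mul0mx ?mulmx0 ?addr0 ?add0r.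
  by rewrite addrCA subrr addr0.
have upper_lower : M = block_mx (1%:M - u *m w) u 0 1%:M *m block_mx 1%:M 0 w 1%:M.
  by rewrite mulmx_block ?mul1mx ?mulmx1 ?mul0mx ?mulmx0 ?addr0 ?add0r subrK.
have := congr1 determinant lower_upper; rewrite {1}upper_lower !det_mulmx.
rewrite det_lblock !det_ublock !det1 !mul1r !mulr1 det_mx11.
by rewrite !mxE eqxx mulr1n => ->.
Qed.

Section LorentzForm.
Variable R : realType.
Implicit Types (u w n x : 'cV[R]_5) (M N : 'M[R]_5).

Lemma trmx_lorJ : (lorJ R)^T = lorJ R.
Proof. exact: tr_diag_mx. Qed.

Lemma mink_mx11 u w : u^T *m lorJ R *m w = (mink u w)%:M.
Proof. by rewrite [LHS]mx11_scalar. Qed.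

Lemma minkE u w :
  mink u w = - (u 0 0 * w 0 0) + \sum_(i < 4) u (lift 0 i) 0 * w (lift 0 i) 0.
Proof.
rewrite /mink /lorJ mul_mx_diag mxE big_ord_recl !mxE eqxx mulrN1 mulNr.
by congr (_ + _); apply: eq_bigr => i _; rewrite !mxE mulr1.
Qed.

Lemma minkC u w : mink u w = mink w u.
Proof.
have -> : mink u w = (u^T *m lorJ R *m w)^T 0 0 by rewrite mxE.
by rewrite !trmx_mul trmxK trmx_lorJ mulmxA.
Qed.

Lemma inH4_neq0 x : inH4 x -> x != 0.
Proof.
case=> + _; apply: contraPneq => ->.
by rewrite /mink trmx0 !mul0mx mxE => /eqP; rewrite eq_sym oppr_eq0 oner_eq0.
Qed.

Lemma refl_entry n i j : refl n i j =
  (i == j)%:R - 2 / mink n n * (n i 0 * n j 0) * (if j == 0 then -1 else 1).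
Proof.
rewrite /refl /lorJ mul_mx_diag !mxE big_ord1 !mxE.
by case: (j == 0); ring.
Qed.

Lemma det_refl n : mink n n != 0 -> \det (refl n) = -1.
Proof.
move=> nn0; rewrite /refl scalemxAl det_1subM -scalemxAr mxE -/(mink n n).
by rewrite divfK //; ring.
Qed.

Definition lorentz M := M^T *m lorJ R *m M = lorJ R.

Lemma lorentzM M N : lorentz M -> lorentz N -> lorentz (M *m N).
Proof.
by move=> LM LN; rewrite /lorentz trmx_mul !mulmxA -!(mulmxA N^T) LM mulmxA.
Qed.

Lemma lorentz_refl n : mink n n != 0 -> lorentz (refl n).
Proof.
move=> nn0; set c := mink n n; set P := n *m (n^T *m lorJ R).
have PtJ : P^T *m lorJ R = lorJ R *m P.
  by rewrite /P !trmx_mul trmxK trmx_lorJ !mulmxA.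
have PP : P *m P = c *: P.
  rewrite /P -mulmxA [(_ *m lorJ R) *m (n *m _)]mulmxA mink_mx11.
  by rewrite mul_scalar_mx -scalemxAr.
have PJP : P^T *m lorJ R *m P = c *: (lorJ R *m P).
  by rewrite PtJ -mulmxA PP -scalemxAr.
have -> : refl n = 1%:M - (2 / c) *: P by [].
set a := 2 / c; rewrite /lorentz [(_ - _)^T]linearB /= [(_ *: _)^T]linearZ /= trmx1.
rewrite mulmxBl mul1mx mulmxBr mulmx1 mulmxBl -!scalemxAl -!scalemxAr PJP PtJ !scalerA.
have -> : a * a * c = a + a by rewrite /a; field.
by rewrite scalerDl opprB addrK subrK.
Qed.
End LorentzForm.

Section Planes.
Variable R : realType.
Implicit Types (n x : 'cV[R]_5).

Definition perp_plane n1 n2 x := inH4 x /\ mink n1 x = 0 /\ mink n2 x = 0.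

Definition plane_frame n1 n2 :=
  [/\ 0 < mink n1 n1, 0 < mink n2 n2, mink n1 n2 = 0 & exists x, perp_plane n1 n2 x].

Lemma is_plane_perp n1 n2 : plane_frame n1 n2 -> is_plane (perp_plane n1 n2).
Proof.
case=> h1 h2 h12 [p Pp]; have [nz1 nz2] := (lt0r_neq0 h1, lt0r_neq0 h2).
pose N := row_mx (lorJ R *m n1) (lorJ R *m n2).
have mulN x : x^T *m N = row_mx (mink x n1)%:M (mink x n2)%:M.
  by rewrite mul_mx_row !mulmxA !mink_mx11.
exists (kermx N); split; [|split; [by exists p|]].
- rewrite mxrank_ker; suff -> : \rank N = 2%N by [].
  apply/eqP; rewrite eqn_leq rank_leq_col /=.
  pose L := col_mx ((mink n1 n1)^-1 *: n1^T) ((mink n2 n2)^-1 *: n2^T).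
  have LN : L *m N = 1%:M.
    rewrite mul_col_row -!scalemxAl !mulmxA !mink_mx11 (scalar_mx_block 1 1 1).
    rewrite (minkC n2 n1) h12.
    by congr block_mx; apply/matrixP => i j;
      rewrite !ord1 !mxE ?eqxx ?mulr1n ?mulr0n ?mulr0 ?mulVf.
  by have := mxrankM_maxr L N; rewrite LN mxrank1.
- move=> x; rewrite sub_kermx mulN row_mx_eq0 !scalar_mx11_eq0 /perp_plane.
  by rewrite !(minkC x); split=> [[? [-> ->]]|[? /andP[/eqP ? /eqP ?]]]; rewrite ?eqxx.
Qed.

Definition halfturn_mx n1 n2 := refl n1 *m refl n2.

Lemma halfturn_perp n1 n2 :
  plane_frame n1 n2 -> halfturn (perp_plane n1 n2) (halfturn_mx n1 n2).
Proof. by case=> h1 h2 h12 _; exists n1, n2. Qed.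

Lemma lorentz_halfturn n1 n2 : plane_frame n1 n2 -> lorentz (halfturn_mx n1 n2).
Proof.
by case=> /lt0r_neq0 h1 /lt0r_neq0 h2 _ _; apply: lorentzM; apply: lorentz_refl.
Qed.

Lemma det_halfturn n1 n2 : plane_frame n1 n2 -> \det (halfturn_mx n1 n2) = 1.
Proof.
by case=> /lt0r_neq0 h1 /lt0r_neq0 h2 _ _; rewrite det_mulmx !det_refl // mulrNN mulr1.
Qed.

Lemma isom_or_halfturnM a1 a2 b1 b2 (M := halfturn_mx a1 a2 *m halfturn_mx b1 b2) :
  plane_frame a1 a2 -> plane_frame b1 b2 -> 0 < M 0 0 -> isom_or M.
Proof.
move=> Fa Fb M00; split; first exact: lorentzM (lorentz_halfturn Fa) (lorentz_halfturn Fb).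
by rewrite det_mulmx !det_halfturn // mulr1.
Qed.

Lemma linked_halfturns a1 a2 b1 b2 d1 d2 :
  plane_frame a1 a2 -> plane_frame b1 b2 -> plane_frame d1 d2 ->
  linked (halfturn_mx a1 a2 *m halfturn_mx b1 b2) (halfturn_mx b1 b2 *m halfturn_mx d1 d2).
Proof.
move=> Fa Fb Fd; exists (perp_plane a1 a2), (perp_plane b1 b2), (perp_plane d1 d2).
exists (halfturn_mx a1 a2), (halfturn_mx b1 b2), (halfturn_mx d1 d2).
by do 6 (split; first by [apply: is_plane_perp | apply: halfturn_perp]).
Qed.
End Planes.

Lemma unitmx_scalar_linv (R : fieldType) n (K M : 'M[R]_n) (c : R) :
  K *m M = c%:M -> c != 0 -> M \in unitmx.
Proof.
move=> KM c0; suff : (c^-1 *: K) *m M = 1%:M by case/mulmx1_unit.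
by rewrite -scalemxAl KM scale_scalar_mx mulVf.
Qed.

Section KrylovRank.
Variables (R : fieldType) (n : nat).
Implicit Types (A B : 'M[R]_n.+1) (u x y : 'cV[R]_n.+1) (v : 'rV[R]_n.+1).

Definition krylov B u : 'M[R]_n.+1 := \matrix_(i < n.+1) (B ^+ i *m u)^T.
Definition cokrylov v B : 'M[R]_n.+1 := \matrix_(i < n.+1) (v *m B ^+ i).

Lemma mulmx_exprS B i x : B ^+ i.+1 *m x = B *m (B ^+ i *m x).
Proof. by rewrite exprS -mulmxE mulmxA. Qed.

Lemma mulmx_exprSr v B i : v *m B ^+ i.+1 = v *m B ^+ i *m B.
Proof. by rewrite exprSr -mulmxE mulmxA. Qed.

Lemma cokrylov_nonvanishing v B x :
  cokrylov v B \in unitmx -> x != 0 -> exists i : 'I_n.+1, v *m (B ^+ i *m x) != 0.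
Proof.
move=> Ku x0; case: (pickP (fun i : 'I_n.+1 => v *m (B ^+ i *m x) != 0)) => [i ? | all0].
  by exists i.
case/negP: x0; rewrite -(mulKmx Ku x); suff -> : cokrylov v B *m x = 0 by rewrite mulmx0.
apply/row_matrixP => i; rewrite row_mul rowK row0 -mulmxA.
by apply/eqP/negbFE/all0.
Qed.

Section StableSet.
Variables (m : nat) (A B : 'M[R]_n.+1) (u : 'cV[R]_n.+1) (v : 'rV[R]_n.+1).
Variables (S : 'cV[R]_n.+1 -> Prop) (V : 'M[R]_(m, n.+1)).
Hypothesis rank_one : (A - 1) * (A - 1) = u *m v.
Hypothesis SA : forall x, S x -> S (A *m x).
Hypothesis SB : forall x, S x -> S (B *m x).
Hypothesis SV : forall x, S x -> (x^T <= V)%MS.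

Lemma stable_expB i x : S x -> S (B ^+ i *m x).
Proof.
elim: i x => [|i IH] x Sx; first by rewrite expr0 mul1mx.
by rewrite mulmx_exprS; apply/SB/IH.
Qed.

Lemma krylov_sub_stable y : S y -> v *m y != 0 -> (krylov B u <= V)%MS.
Proof.
move=> Sy vy0; pose inW x := (x^T <= V)%MS.
have WB x1 x2 : inW x1 -> inW x2 -> inW (x1 - x2).
  by rewrite /inW linearB /= => W1 W2; apply: addmx_sub; rewrite // eqmx_opp.
have W_orbit i x : S x -> inW (B ^+ i *m x) by move=> Sx; apply/SV/stable_expB.
set c := (v *m y) 0 0; have c0 : c != 0 by rewrite -scalar_mx11_eq0 -mx11_scalar.
have expand : c *: u = A *m (A *m y) - A *m y - (A *m y - y).
  rewrite -mul_mx_scalar /c -mx11_scalar [u *m _]mulmxA -rank_one.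
  by rewrite mulrBl mulrBr mulr1 mul1r !mulmxBl mul1mx -mulmxE mulmxA.
apply/row_subP => i; rewrite rowK.
have : inW (B ^+ i *m (c *: u)).
  by rewrite expand !mulmxBr; do 2 apply: (WB); apply: W_orbit; auto.
by rewrite /inW -scalemxAr linearZ /= (eqmx_scale _ c0).
Qed.
End StableSet.

Lemma stable_set_row_full m A B u v (S : 'cV[R]_n.+1 -> Prop) (V : 'M[R]_(m, n.+1)) x0 :
  (A - 1) * (A - 1) = u *m v ->
  krylov B u \in unitmx -> cokrylov v B \in unitmx ->
  (forall x, S x -> S (A *m x)) -> (forall x, S x -> S (B *m x)) ->
  (forall x, S x -> (x^T <= V)%MS) -> S x0 -> x0 != 0 -> row_full V.
Proof.
move=> Auv Ku Ku' SA SB SV Sx0 x00.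
have [i vBx0] := cokrylov_nonvanishing Ku' x00.
have KV := krylov_sub_stable Auv SA SB SV (stable_expB SB i Sx0) vBx0.
by rewrite -sub1mx (submx_trans _ KV) // sub1mx row_full_unit.
Qed.
End KrylovRank.

Section NoInvariantSubspace.
Variable R : realType.

Lemma inv_set_stable (M : 'M[R]_5) S x : inv_set M S -> S x -> S (M *m x).
Proof. by move=> iM Sx; apply/iM; exists x. Qed.

Lemma no_common_invariant_tg_subspace (A B : 'M[R]_5) u v :
  (A - 1) * (A - 1) = u *m v -> krylov B u \in unitmx -> cokrylov v B \in unitmx ->
  forall k S, (k <= 3)%N -> tg_subspace k S -> ~ (inv_set A S /\ inv_set B S).
Proof.
move=> Auv Ku Ku' k S k3 [V [rV [[x0 Sx0] HS]]] [iA iB].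
have : row_full V.
  apply: (stable_set_row_full Auv Ku Ku' (S := S) _ _ _ Sx0).
  - by move=> x; apply: inv_set_stable.
  - by move=> x; apply: inv_set_stable.
  - by move=> x /HS[].
  - by case/HS: Sx0 => /inH4_neq0.
by rewrite /row_full rV eqSS => /eqP k4; rewrite k4 in k3.
Qed.
End NoInvariantSubspace.

Section Example.
Variable R : realType.

Definition mxl (l : seq (seq R)) : 'M[R]_5 := \matrix_(i, j) nth 0 (nth [::] l i) j.
Definition colv (l : seq R) : 'cV[R]_5 := \col_i nth 0 l i.
Definition rowv (l : seq R) : 'rV[R]_5 := \row_j nth 0 l j.

Ltac mx_compute :=
  apply/matrixP; let i := fresh "i" in let j := fresh "j" in intros i j;
  repeat (rewrite !mxE || rewrite !big_ord_recl !big_ord0);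
  case: i => -[|[|[|[|[|?]]]]] //= ?; case: j => -[|[|[|[|[|?]]]]] //= ?; ring.

Ltac mink_compute := rewrite minkE !big_ord_recl big_ord0 !mxE /=; ring.

Definition nv := colv [:: 0; 0; 1; 0; 0].
Definition ev := colv [:: 0; 0; 0; 1; 0].
Definition mv := colv [:: 1; 1; 1; 0; 0].
Definition pv := colv [:: 0; 1; 0; 1; 0].
Definition qv := colv [:: 0; 0; 1; 0; 1].
Definition pa := colv [:: 1; 0; 0; 0; 0].
Definition pb := colv [:: 2; 1; 1; 0; 1].

Lemma mink_nv : mink nv nv = 1. Proof. by mink_compute. Qed.
Lemma mink_ev : mink ev ev = 1. Proof. by mink_compute. Qed.
Lemma mink_mv : mink mv mv = 1. Proof. by mink_compute. Qed.
Lemma mink_pv : mink pv pv = 2. Proof. by mink_compute. Qed.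
Lemma mink_qv : mink qv qv = 2. Proof. by mink_compute. Qed.

Ltac point_compute :=
  split; [split|split]; by [mink_compute | rewrite mxE /= ?ltr01 ?ltr0n].

Lemma frame_alpha : plane_frame nv ev.
Proof.
by split; rewrite ?mink_nv ?mink_ev ?ltr01 //; [mink_compute | exists pa; point_compute].
Qed.
Lemma frame_beta : plane_frame mv ev.
Proof.
by split; rewrite ?mink_mv ?mink_ev ?ltr01 //; [mink_compute | exists pb; point_compute].
Qed.
Lemma frame_delta : plane_frame pv qv.
Proof.
by split; rewrite ?mink_pv ?mink_qv ?ltr0n //; [mink_compute | exists pa; point_compute].
Qed.

Ltac refl_compute norm :=
  apply/matrixP; let i := fresh "i" in let j := fresh "j" in intros i j;
  rewrite refl_entry norm ?divr1 ?divff ?pnatr_eq0 // !mxE;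
  case: i => -[|[|[|[|[|?]]]]] //= ?; case: j => -[|[|[|[|[|?]]]]] //= ?; ring.

Lemma refl_nv : refl nv =
  mxl [:: [:: 1;0;0;0;0]; [:: 0;1;0;0;0]; [:: 0;0;-1;0;0]; [:: 0;0;0;1;0]; [:: 0;0;0;0;1]].
Proof. refl_compute mink_nv. Qed.
Lemma refl_ev : refl ev =
  mxl [:: [:: 1;0;0;0;0]; [:: 0;1;0;0;0]; [:: 0;0;1;0;0]; [:: 0;0;0;-1;0]; [:: 0;0;0;0;1]].
Proof. refl_compute mink_ev. Qed.
Lemma refl_mv : refl mv =
  mxl [:: [:: 3;-2;-2;0;0]; [:: 2;-1;-2;0;0]; [:: 2;-2;-1;0;0]; [:: 0;0;0;1;0]; [:: 0;0;0;0;1]].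
Proof. refl_compute mink_mv. Qed.
Lemma refl_pv : refl pv =
  mxl [:: [:: 1;0;0;0;0]; [:: 0;0;0;-1;0]; [:: 0;0;1;0;0]; [:: 0;-1;0;0;0]; [:: 0;0;0;0;1]].
Proof. refl_compute mink_pv. Qed.
Lemma refl_qv : refl qv =
  mxl [:: [:: 1;0;0;0;0]; [:: 0;1;0;0;0]; [:: 0;0;0;0;-1]; [:: 0;0;0;1;0]; [:: 0;0;-1;0;0]].
Proof. refl_compute mink_qv. Qed.

Lemma halfturn_alpha : halfturn_mx nv ev =
  mxl [:: [:: 1;0;0;0;0]; [:: 0;1;0;0;0]; [:: 0;0;-1;0;0]; [:: 0;0;0;-1;0]; [:: 0;0;0;0;1]].
Proof. rewrite /halfturn_mx refl_nv refl_ev; mx_compute. Qed.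
Lemma halfturn_beta : halfturn_mx mv ev =
  mxl [:: [:: 3;-2;-2;0;0]; [:: 2;-1;-2;0;0]; [:: 2;-2;-1;0;0]; [:: 0;0;0;-1;0]; [:: 0;0;0;0;1]].
Proof. rewrite /halfturn_mx refl_mv refl_ev; mx_compute. Qed.
Lemma halfturn_delta : halfturn_mx pv qv =
  mxl [:: [:: 1;0;0;0;0]; [:: 0;0;0;-1;0]; [:: 0;0;0;0;-1]; [:: 0;-1;0;0;0]; [:: 0;0;-1;0;0]].
Proof. rewrite /halfturn_mx refl_pv refl_qv; mx_compute. Qed.

Definition A := halfturn_mx nv ev *m halfturn_mx mv ev.
Definition B := halfturn_mx mv ev *m halfturn_mx pv qv.

Lemma AE : A =
  mxl [:: [:: 3;-2;-2;0;0]; [:: 2;-1;-2;0;0]; [:: -2;2;1;0;0]; [:: 0;0;0;1;0]; [:: 0;0;0;0;1]].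
Proof. rewrite /A halfturn_alpha halfturn_beta; mx_compute. Qed.
Lemma BE : B =
  mxl [:: [:: 3;0;0;2;2]; [:: 2;0;0;1;2]; [:: 2;0;0;2;1]; [:: 0;1;0;0;0]; [:: 0;0;-1;0;0]].
Proof. rewrite /B halfturn_beta halfturn_delta; mx_compute. Qed.

Definition u0 := colv [:: 1; 1; 0; 0; 0].
Definition v0 := rowv [:: 4; -4; 0; 0; 0].

Lemma A_rank_one : (A - 1) * (A - 1) = u0 *m v0.
Proof. rewrite AE -mulmxE; mx_compute. Qed.

Lemma B_u0 : B *m u0 = colv [:: 3; 2; 2; 1; 0].
Proof. rewrite BE; mx_compute. Qed.
Lemma B_u1 : B *m colv [:: 3; 2; 2; 1; 0] = colv [:: 11; 7; 8; 2; -2].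
Proof. rewrite BE; mx_compute. Qed.
Lemma B_u2 : B *m colv [:: 11; 7; 8; 2; -2] = colv [:: 33; 20; 24; 7; -8].
Proof. rewrite BE; mx_compute. Qed.
Lemma B_u3 : B *m colv [:: 33; 20; 24; 7; -8] = colv [:: 97; 57; 72; 20; -24].
Proof. rewrite BE; mx_compute. Qed.

Lemma v0_B : v0 *m B = rowv [:: 4; 0; 0; 4; 0].
Proof. rewrite BE; mx_compute. Qed.
Lemma v1_B : rowv [:: 4; 0; 0; 4; 0] *m B = rowv [:: 12; 4; 0; 8; 8].
Proof. rewrite BE; mx_compute. Qed.
Lemma v2_B : rowv [:: 12; 4; 0; 8; 8] *m B = rowv [:: 44; 8; -8; 28; 32].
Proof. rewrite BE; mx_compute. Qed.
Lemma v3_B : rowv [:: 44; 8; -8; 28; 32] *m B = rowv [:: 132; 28; -32; 80; 96].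
Proof. rewrite BE; mx_compute. Qed.

Lemma krylovE : krylov B u0 = mxl [:: [:: 1; 1; 0; 0; 0]; [:: 3; 2; 2; 1; 0];
  [:: 11; 7; 8; 2; -2]; [:: 33; 20; 24; 7; -8]; [:: 97; 57; 72; 20; -24]].
Proof.
apply/row_matrixP => -[[|[|[|[|[|?]]]]] ?] //; rewrite rowK /=;
  rewrite ?mulmx_exprS expr0 mul1mx ?B_u0 ?B_u1 ?B_u2 ?B_u3; mx_compute.
Qed.

Lemma cokrylovE : cokrylov v0 B = mxl [:: [:: 4; -4; 0; 0; 0]; [:: 4; 0; 0; 4; 0];
  [:: 12; 4; 0; 8; 8]; [:: 44; 8; -8; 28; 32]; [:: 132; 28; -32; 80; 96]].
Proof.
apply/row_matrixP => -[[|[|[|[|[|?]]]]] ?] //; rewrite rowK /=;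
  rewrite ?mulmx_exprSr expr0 mulmx1 ?v0_B ?v1_B ?v2_B ?v3_B; mx_compute.
Qed.

Lemma krylov_unit : krylov B u0 \in unitmx.
Proof.
apply: (@unitmx_scalar_linv _ _ (mxl [:: [:: 9; 4; -4; -8; 3]; [:: -5; -4; 4; 8; -3];
  [:: -7; -2; 4; 2; -1]; [:: -3; 4; -4; 4; -1]; [:: 1; 4; 2; -4; 1]]) _ 4).
  by rewrite krylovE; mx_compute.
by rewrite pnatr_eq0.
Qed.

Lemma cokrylov_unit : cokrylov v0 B \in unitmx.
Proof.
apply: (@unitmx_scalar_linv _ _ (mxl [:: [:: 3; 0; 4; -4; 1]; [:: -1; 0; 4; -4; 1];
  [:: 1; -2; 4; 2; -1]; [:: -3; 4; -4; 4; -1]; [:: -1; -4; -2; 4; -1]]) _ 16).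
  by rewrite cokrylovE; mx_compute.
by rewrite pnatr_eq0.
Qed.
End Example.

Theorem theorem8p1 (R : realType) :
  exists A B : 'M[R]_5,
    isom_or A /\ isom_or B /\ linked A B /\
    (forall (k : nat) (S : 'cV[R]_5 -> Prop),
        (k <= 3)%N -> tg_subspace k S -> ~ (inv_set A S /\ inv_set B S)).
Proof.
exists (A R), (B R); split; [|split; [|split]].
- by apply: isom_or_halfturnM (frame_alpha R) (frame_beta R) _; rewrite -/(A R) AE mxE.
- by apply: isom_or_halfturnM (frame_beta R) (frame_delta R) _; rewrite -/(B R) BE mxE.
- exact: linked_halfturns (frame_alpha R) (frame_beta R) (frame_delta R).
- exact: no_common_invariant_tg_subspace (A_rank_one R) (krylov_unit R) (cokrylov_unit R).
Qed.
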